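(* Let $Z\subset\mathbb R^n$ be a convex and compact set. For every $y\in Z\setminus\partial Z$ there exists an extreme point $x$ of $Z$ such that $b(y)=t_y(x)$.
   Context: For $x,y\in Z$ write $x\leq_C y$ if there exist $z\in Z$ and $0<t\leq 1$ with $y=tx+(1-t)z$. The (algebraic) boundary $\partial Z$ is the set of $y\in Z$ for which there exists $x\in Z$ with $x\not\leq_C y$. The weight function is $t_y(x)=\sup\{0\leq t<1 : \frac{y-tx}{1-t}\in Z\}$ for $x,y\in Z$, and the boundariness of $y\in Z$ is $b(y)=\inf_{x\in Z}t_y(x)$. *)

From HB Require Import structures.
From mathcomp Require Import all_boot all_order all_algebra.
From mathcomp Require Import all_classical all_reals all_analysis.
Set Implicit Arguments. Unset Strict Implicit. Unset Printing Implicit Defensive.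
Import Order.TTheory GRing.Theory Num.Theory.
Import numFieldNormedType.Exports.
Local Open Scope classical_set_scope.
Local Open Scope ring_scope.

Section Defs.
Variables (R : realType) (n : nat).
Implicit Types (Z : set 'rV[R]_n) (x y z : 'rV[R]_n).

Definition leC Z x y : Prop :=
  exists z, Z z /\ exists t : R, 0 < t <= 1 /\ y = t *: x + (1 - t) *: z.

Definition alg_boundary Z : set 'rV[R]_n :=
  [set y | Z y /\ exists x, Z x /\ ~ leC Z x y].

Definition weight Z y x : R :=
  sup [set t : R | 0 <= t < 1 /\ Z ((1 - t)^-1 *: (y - t *: x))].

Definition boundariness Z y : R := inf [set weight Z y x | x in Z].

Definition extreme_point Z x : Prop :=
  Z x /\ forall a b (t : R), Z a -> Z b -> 0 < t < 1 ->
    x = t *: a + (1 - t) *: b -> a = x /\ b = x.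
End Defs.

From HB Require Import structures.
From mathcomp Require Import all_boot all_order all_algebra.
From mathcomp Require Import all_classical all_reals all_analysis.
From mathcomp Require Import ring lra.
Set Implicit Arguments. Unset Strict Implicit. Unset Printing Implicit Defensive.
Import Order.TTheory GRing.Theory Num.Theory.
Import numFieldNormedType.Exports.
Local Open Scope classical_set_scope.
Local Open Scope ring_scope.

(* Since [y] lies in the relative algebraic interior of [Z] and [Z] is
   finite-dimensional, segments from [y] can be prolonged beyond [y] by a
   uniform amount; this makes the weight [t_y] continuous on [Z], so it attains
   its infimum [b(y)].  Moreover [1 / t_y] is convex, hence the set of
   minimisers of [t_y] is a compact face of [Z].  A maximiser of the strictly
   convex function [|x|^2] on that face is an extreme point of the face, hence
   of [Z]. *)

Lemma inf_image_argmin (R : realType) T (A : set T) (f : T -> R) x0 :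
  A x0 -> (forall x, A x -> f x0 <= f x) -> inf [set f x | x in A] = f x0.
Proof.
move=> Ax0 x0min; apply/eqP; rewrite eq_le; apply/andP; split.
  by apply: ge_inf; [exists (f x0) => _ [x Ax <-]; exact: x0min | exists x0].
by apply: lb_le_inf; [exists (f x0), x0 | move=> _ [x Ax <-]; exact: x0min].
Qed.

Lemma compact_level_set (T : topologicalType) (R : realType) (A : set T)
    (f : T -> R) (c : R) : hausdorff_space T -> compact A ->
  {within A, continuous f} -> compact (A `&` f @^-1` [set c]).
Proof.
move=> hT cA fA; have clA : closed A := compact_closed hT cA.
apply: (subclosed_compact _ cA); last exact: subIsetl.
rewrite closed_setSI //.
by apply: preimage_closed => [x _|]; [exact: fA | exact: closed_eq].
Qed.

Section ConvexRows.
Variables (R : numFieldType) (n : nat) (A : set 'rV[R]_n).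
Hypothesis cvxA : convex_set A.

Lemma convex_comb a b (t : R) : A a -> A b -> 0 <= t <= 1 -> A (t *: a + (1 - t) *: b).
Proof.
move=> Aa Ab /andP[t0 t1].
by have := cvxA (Itv01 t0 t1) (mem_set Aa) (mem_set Ab); rewrite inE.
Qed.

Variable y : 'rV[R]_n.
Hypothesis Ay : A y.

Lemma convex_scale d (l : R) : A (y + d) -> 0 <= l <= 1 -> A (y + l *: d).
Proof.
move=> Ad l01; have -> : y + l *: d = l *: (y + d) + (1 - l) *: y.
  by apply/rowP => j; rewrite !mxE; ring.
exact: convex_comb.
Qed.

Let dilated (l : R) u := exists2 d, A (y + d) & u = l *: d.

Let dilatedD (l1 l2 : R) u1 u2 : 0 <= l1 -> 0 <= l2 ->
  dilated l1 u1 -> dilated l2 u2 -> dilated (l1 + l2) (u1 + u2).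
Proof.
move=> l1_ge0 l2_ge0 [d1 Ad1 ->] [d2 Ad2 ->].
have [l_eq0|l_neq0] := eqVneq (l1 + l2) 0.
  have l1_eq0 : l1 = 0 by apply/eqP; rewrite eq_le l1_ge0 -l_eq0 lerDl l2_ge0.
  move: l_eq0; rewrite l1_eq0 add0r => ->.
  by exists 0; rewrite ?addr0 // !scale0r addr0.
have l_gt0 : 0 < l1 + l2 by rewrite lt_neqAle eq_sym l_neq0 addr_ge0.
set s := l1 / (l1 + l2).
exists (s *: d1 + (1 - s) *: d2).
  have -> : y + (s *: d1 + (1 - s) *: d2) = s *: (y + d1) + (1 - s) *: (y + d2).
    by apply/rowP => j; rewrite !mxE; ring.
  have s_le1 : s <= 1 by rewrite ler_pdivrMr // mul1r lerDl.
  by apply: convex_comb; rewrite // s_le1 divr_ge0 // ltW.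
by apply/rowP => j; rewrite !mxE /s; field.
Qed.

Lemma convex_sum (I : finType) (d : I -> 'rV[R]_n) (l : I -> R) :
  (forall i, A (y + d i)) -> (forall i, 0 <= l i) -> \sum_i l i <= 1 ->
  A (y + \sum_i l i *: d i).
Proof.
move=> Ad l_ge0 l_le1.
have [_ [e Ae ->]] : 0 <= \sum_i l i /\ dilated (\sum_i l i) (\sum_i l i *: d i).
  apply: (big_rec2 (fun l u => 0 <= l /\ dilated l u)).
    by split=> //; exists 0; rewrite ?addr0 // scale0r.
  move=> i l' u _ [l'_ge0 Hu]; split; first by rewrite addr_ge0.
  by apply: dilatedD => //; exists (d i).
by apply: convex_scale; rewrite // sumr_ge0.
Qed.

End ConvexRows.

Lemma finite_spanning_rows (R : fieldType) n (Z : set 'rV[R]_n) y :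
  exists m (B : 'M[R]_(m, n)),
    (forall i, Z (y + row i B)) /\ forall x, Z x -> (x - y <= B)%MS.
Proof.
apply: contrapT => noB.
(* Otherwise rows [x - y] could be added forever, each one raising the rank. *)
suff [m [B [_ rkB]]] : exists m (B : 'M[R]_(m, n)),
    (forall i, Z (y + row i B)) /\ (n < \rank B)%N.
  by move: (rank_leq_col B); rewrite leqNgt rkB.
elim: n.+1 => [|k [m [B [ZB rkB]]]]; first by exists 0%N, 0; split=> // -[].
have /existsNP[x /not_implyP[Zx xB]] : ~ forall x, Z x -> (x - y <= B)%MS.
  by move=> spanB; apply: noB; exists m, B.
exists (1 + m)%N, (col_mx (x - y) B); split.
  move=> i; rewrite -[i]splitK; case: (fintype.split i) => [i1|i2] /=.
    rewrite rowKu (_ : row i1 (x - y) = x - y); first by rewrite addrC subrK.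
    by apply/rowP => j; rewrite !mxE (ord1 i1).
  by rewrite rowKd; exact: ZB.
apply: leq_ltn_trans rkB (rank_ltmx _); move/negP: xB => xB.
rewrite ltmxE col_mx_sub (negbTE xB) andbT.
by have := submx_refl (col_mx (x - y) B); rewrite col_mx_sub => /andP[].
Qed.

Lemma pinvmx_l1_bound (R : realFieldType) m n (B : 'M[R]_(m, n)) :
  exists2 r : R, 0 < r & forall d : 'rV_n,
    (forall j, `|d 0 j| < r) -> \sum_i `|(d *m pinvmx B) 0 i| <= 1.
Proof.
set P := pinvmx B; set C := \sum_i \sum_j `|P j i|.
have C_ge0 : 0 <= C by apply: sumr_ge0 => i _; exact: sumr_ge0.
have C1_gt0 : 0 < C + 1 by rewrite ltr_wpDl.
exists (C + 1)^-1 => [|d small]; first by rewrite invr_gt0.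
apply: (@le_trans _ _ (\sum_i \sum_j (C + 1)^-1 * `|P j i|)).
  apply: ler_sum => i _; rewrite mxE; apply: le_trans (ler_norm_sum _ _ _) _.
  by apply: ler_sum => j _; rewrite normrM ler_wpM2r // ltW.
under eq_bigr do rewrite -mulr_sumr.
rewrite -mulr_sumr -/C.
by rewrite ler_pdivrMl // mulr1 lerDl.
Qed.

Section IntrinsicCore.
Variables (R : realFieldType) (n : nat) (Z : set 'rV[R]_n) (y : 'rV[R]_n).

(* [icore] is the relative algebraic interior (intrinsic core) of [Z]. *)
Definition icore := forall x, Z x -> exists2 e : R, 0 < e & Z (y - e *: (x - y)).

Hypotheses (cvxZ : convex_set Z) (Zy : Z y) (y_icore : icore).

Lemma icore_symmetric_frame : exists m (B : 'M[R]_(m, n)),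
  (forall i, Z (y + row i B) /\ Z (y - row i B)) /\
  forall x, Z x -> (x - y <= B)%MS.
Proof.
have [m [B [ZB spanB]]] := finite_spanning_rows Z y.
have /choice[f Hf] : forall i, exists f : R, 0 < f /\ Z (y - f *: row i B).
  move=> i; have [f f_gt0] := y_icore (ZB i).
  by rewrite addrAC subrr add0r; exists f.
set e := \big[Order.min/1]_i f i.
have e_gt0 : 0 < e by apply/bigmin_gtP; split=> // i _; exact: (Hf i).1.
have e_le1 : e <= 1 by apply: bigmin_le_id.
exists m, (e *: B); split=> [i|x Zx]; last by rewrite eqmx_scale ?gt_eqF ?spanB.
have [f_gt0 Zf] := Hf i.
have -> : row i (e *: B) = e *: row i B by apply/rowP => j; rewrite !mxE.
split; first by apply: convex_scale; rewrite ?ZB // ltW.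
have -> : y - e *: row i B = y + (e / f i) *: - (f i *: row i B).
  by apply/rowP => j; rewrite !mxE; field; rewrite gt_eqF.
have ef_le1 : e / f i <= 1 by rewrite ler_pdivrMr // mul1r bigmin_le.
by apply: convex_scale; rewrite // ef_le1 divr_ge0 // ltW.
Qed.

Lemma icore_uniform : exists2 r : R, 0 < r & forall a b (c : R), Z a -> Z b ->
  (forall j, `|c * (a 0 j - b 0 j)| < r) -> Z (y + c *: (a - b)).
Proof.
have [m [B [ZB spanB]]] := icore_symmetric_frame.
have [r r_gt0 l1B] := pinvmx_l1_bound B.
exists r => // a b c Za Zb small.
have dB : (c *: (a - b) <= B)%MS.
  have -> : a - b = (a - y) - (b - y) by rewrite opprB addrA subrK.
  by rewrite scalemx_sub // addmx_sub // ?eqmx_opp spanB.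
rewrite -(mulmxKpV dB) mulmx_sum_row; set u := _ *m pinvmx B.
have -> : \sum_i u 0 i *: row i B =
    \sum_i `|u 0 i| *: (if 0 <= u 0 i then row i B else - row i B).
  apply: eq_bigr => i _; case: ifPn => [/ger0_norm -> //|].
  by rewrite -ltNge => /ltr0_norm ->; rewrite scaleNr scalerN opprK.
apply: convex_sum => //; first by move=> i; case: ifP; case: (ZB i).
by apply: l1B => j; rewrite !mxE.
Qed.

End IntrinsicCore.

Lemma not_alg_boundary_icore (R : realType) n (Z : set 'rV[R]_n) y :
  Z y -> ~ alg_boundary Z y -> icore Z y.
Proof.
move=> Zy ybd x Zx.
have : leC Z x y by apply: contrapT => xy; apply: ybd; split=> //; exists x.
move=> [z [Zz [t [/andP[t_gt0 t_le1] ey]]]].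
have [t1|t_neq1] := eqVneq t 1.
  exists 1 => //; suff -> : y - 1 *: (x - y) = y by [].
  by rewrite ey t1; apply/rowP => j; rewrite !mxE; ring.
have t1_gt0 : 0 < 1 - t by rewrite subr_gt0 lt_neqAle t_neq1.
exists (t / (1 - t)); first by rewrite divr_gt0.
suff -> : y - (t / (1 - t)) *: (x - y) = z by [].
by rewrite ey; apply/rowP => j; rewrite !mxE; field; rewrite gt_eqF.
Qed.

Section Weight.
Variables (R : realType) (n : nat) (Z : set 'rV[R]_n) (y : 'rV[R]_n).
Hypotheses (cvxZ : convex_set Z) (Zy : Z y).

(* [weight_set x t] holds iff [y = t *: x + (1 - t) *: z] for some [z] in [Z]. *)
Definition weight_set x :=
  [set t : R | 0 <= t < 1 /\ Z ((1 - t)^-1 *: (y - t *: x))].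

Lemma weight_set0 x : weight_set x 0.
Proof. by rewrite /weight_set /= lexx ltr01 subr0 invr1 scale1r scale0r subr0. Qed.

Lemma has_sup_weight_set x : has_sup (weight_set x).
Proof.
by split; [exists 0; exact: weight_set0 | exists 1 => t [/andP[_ /ltW]]].
Qed.

Lemma weight_set_le x t : weight_set x t -> t <= weight Z y x.
Proof. exact: sup_upper_bound (has_sup_weight_set x) t. Qed.

Lemma weight_le x c : (forall t, weight_set x t -> t <= c) -> weight Z y x <= c.
Proof. by apply: sup_le_ub; exists 0; exact: weight_set0. Qed.

Lemma weight_le1 x : weight Z y x <= 1.
Proof. by apply: weight_le => t [/andP[_ /ltW]]. Qed.

Lemma le_div_weight x (c K : R) : 0 < c -> 0 < weight Z y x ->
  (forall t, weight_set x t -> 0 < t -> K <= c / t) -> K <= c / weight Z y x.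
Proof.
move=> c_gt0 w_gt0 HK; have [K_le0|K_gt0] := leP K 0.
  by apply: le_trans K_le0 _; rewrite divr_ge0 // ltW.
rewrite ler_pdivlMr // mulrC -ler_pdivlMr //; apply: weight_le => t Tt.
have [t_le0|t_gt0] := leP t 0; first by apply: le_trans t_le0 _; rewrite divr_ge0 // ltW.
by rewrite ler_pdivlMr // mulrC -ler_pdivlMr // HK.
Qed.

(* The witness for [x'] is a convex combination of the witness for [x] and of
   [y + (t / al) *: (x - x')]. *)
Lemma weight_set_shift x x' t (al : R) : weight_set x t -> 0 < al ->
  Z (y + (t / al) *: (x - x')) -> weight_set x' (t / (1 + al)).
Proof.
move=> [/andP[t_ge0 t_lt1] Zt] al_gt0 Zs.
have al1_gt0 : 0 < 1 + al by rewrite addr_gt0.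
have t1_gt0 : 0 < 1 - t by rewrite subr_gt0.
have tal_gt0 : 0 < 1 - t + al by rewrite addr_gt0.
split.
  have t'_lt1 : t / (1 + al) < 1.
    by rewrite ltr_pdivrMr // mul1r (lt_trans t_lt1) // ltrDl.
  by rewrite t'_lt1 divr_ge0 // ltW.
have -> : (1 - t / (1 + al))^-1 *: (y - (t / (1 + al)) *: x') =
   ((1 - t) / (1 - t + al)) *: ((1 - t)^-1 *: (y - t *: x)) +
   (1 - (1 - t) / (1 - t + al)) *: (y + (t / al) *: (x - x')).
  by apply/rowP => j; rewrite !mxE; field; rewrite !gt_eqF.
have s_le1 : (1 - t) / (1 - t + al) <= 1 by rewrite ler_pdivrMr // mul1r lerDl ltW.
by apply: convex_comb; rewrite // s_le1 divr_ge0 // ltW.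
Qed.

Lemma weight_le_add x x' (al : R) : 0 < al ->
  (forall t, 0 <= t <= 1 -> Z (y + (t / al) *: (x - x'))) ->
  weight Z y x <= weight Z y x' + al.
Proof.
move=> al_gt0 Zs; have al1_gt0 : 0 < 1 + al by rewrite addr_gt0.
apply: (@le_trans _ _ ((1 + al) * weight Z y x')).
  apply: weight_le => t Tt; rewrite -ler_pdivrMl // mulrC.
  apply/weight_set_le/(weight_set_shift Tt) => //; apply: Zs.
  by case: Tt => /andP[-> /ltW].
by rewrite mulrDl mul1r lerD2l ger_pMr ?weight_le1.
Qed.

(* Witnesses for [a] and [b] combine, with weight [mu], into a witness for
   [s *: a + (1 - s) *: b] at the harmonic mean of [ta] and [tb]. *)
Lemma weight_set_comb a b (s ta tb : R) : 0 < s < 1 ->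
  weight_set a ta -> weight_set b tb -> 0 < ta -> 0 < tb ->
  weight_set (s *: a + (1 - s) *: b) (s / ta + (1 - s) / tb)^-1.
Proof.
move=> /andP[s_gt0 s_lt1] [/andP[_ ta_lt1] Za] [/andP[_ tb_lt1] Zb] ta_gt0 tb_gt0.
set h := s / ta + (1 - s) / tb.
have s1_gt0 : 0 < 1 - s by rewrite subr_gt0.
have ta1_gt0 : 0 < 1 - ta by rewrite subr_gt0.
have tb1_gt0 : 0 < 1 - tb by rewrite subr_gt0.
have h_gt1 : 1 < h.
  have ha : s < s / ta by rewrite ltr_pdivlMr // gtr_pMr.
  have hb : 1 - s < (1 - s) / tb by rewrite ltr_pdivlMr // gtr_pMr.
  by apply: le_lt_trans (ltrD ha hb); rewrite addrC subrK.
have h_gt0 : 0 < h by apply: lt_trans h_gt1.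
have hV_lt1 : h^-1 < 1 by rewrite invf_lt1.
have hV_gt0 : 0 < h^-1 by rewrite invr_gt0.
split; first by rewrite ltW.
have k0 : s * tb + (1 - s) * ta = h * (ta * tb).
  by rewrite /h; field; rewrite !gt_eqF.
have k0_neq0 : s * tb + (1 - s) * ta != 0 by rewrite k0 gt_eqF // !mulr_gt0.
have k1_neq0 : s * tb + (1 - s) * ta - ta * tb != 0.
  by rewrite k0 -{2}[ta * tb]mul1r -mulrBl gt_eqF // !mulr_gt0 // subr_gt0.
set mu := h^-1 * s * (1 - ta) / (ta * (1 - h^-1)).
have mu1 : 1 - mu = h^-1 * (1 - s) * (1 - tb) / (tb * (1 - h^-1)).
  by rewrite /mu /h; field; rewrite k0_neq0 k1_neq0 /= !gt_eqF.
have -> : (1 - h^-1)^-1 *: (y - h^-1 *: (s *: a + (1 - s) *: b)) =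
   mu *: ((1 - ta)^-1 *: (y - ta *: a)) + (1 - mu) *: ((1 - tb)^-1 *: (y - tb *: b)).
  rewrite mu1; apply/rowP => j; rewrite !mxE /mu /h; field.
  by rewrite k0_neq0 k1_neq0 /= !gt_eqF.
have mu_le1 : mu <= 1.
  by rewrite -subr_ge0 mu1 !(divr_ge0, mulr_ge0) // ltW // subr_gt0.
by apply: convex_comb; rewrite // mu_le1 !(divr_ge0, mulr_ge0) // ltW // subr_gt0.
Qed.

Section InteriorPoint.
Hypothesis y_icore : icore Z y.

Lemma weight_gt0 x : Z x -> 0 < weight Z y x.
Proof.
move=> Zx; have [e e_gt0 Ze] := y_icore Zx.
have e1_gt0 : 0 < 1 + e by rewrite addr_gt0.
apply: (@lt_le_trans _ _ (e / (1 + e))); first by rewrite divr_gt0.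
apply: weight_set_le; split.
  by rewrite divr_ge0 ?ltW //= ltr_pdivrMr // mul1r ltrDr ltr01.
have -> : (1 - e / (1 + e))^-1 *: (y - (e / (1 + e)) *: x) = y - e *: (x - y).
  by apply/rowP => j; rewrite !mxE; field; rewrite gt_eqF //= addrK oner_neq0.
exact: Ze.
Qed.

Lemma weight_lipschitz : exists2 r : R, 0 < r & forall x x' (al : R),
  Z x -> Z x' -> 0 < al -> (forall j, `|x 0 j - x' 0 j| < r * al) ->
  weight Z y x <= weight Z y x' + al.
Proof.
have [r r_gt0 Zr] := icore_uniform cvxZ Zy y_icore.
exists r => // x x' al Zx Zx' al_gt0 close.
apply: weight_le_add => // t /andP[t_ge0 t_le1]; apply: Zr => // j.
rewrite normrM (ger0_norm (divr_ge0 t_ge0 (ltW al_gt0))).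
apply: (@le_lt_trans _ _ (`|x 0 j - x' 0 j| / al)).
  by rewrite mulrAC ler_pM2r ?invr_gt0 // ler_piMl.
by rewrite ltr_pdivrMr // mulrC.
Qed.

Lemma weight_continuous : {within Z, continuous (weight Z y)}.
Proof.
have [r r_gt0 wlip] := weight_lipschitz.
apply/subspace_continuousP => x Zx; apply/cvgrPdist_lt => e e_gt0.
have e2_gt0 : 0 < e / 2 by rewrite divr_gt0.
apply/nbhs_ballP; exists (r * (e / 2)); first exact: mulr_gt0.
move=> x' [_ xx'] Zx'; have close j : `|x 0 j - x' 0 j| < r * (e / 2).
  by have := xx' 0 j; rewrite -ball_normE.
have close' j : `|x' 0 j - x 0 j| < r * (e / 2) by rewrite distrC.
have := wlip x x' _ Zx Zx' e2_gt0 close; have := wlip x' x _ Zx' Zx e2_gt0 close'.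
rewrite /from_subspace ltr_norml => h1 h2; apply/andP; split; lra.
Qed.

Lemma weight_inv_convex a b (s : R) : Z a -> Z b -> 0 < s < 1 ->
  (weight Z y (s *: a + (1 - s) *: b))^-1 <=
  s / weight Z y a + (1 - s) / weight Z y b.
Proof.
move=> Za Zb s01; have /andP[s_gt0 s_lt1] := s01.
have s1_gt0 : 0 < 1 - s by rewrite subr_gt0.
have Zab : Z (s *: a + (1 - s) *: b) by apply: convex_comb; rewrite // !ltW.
rewrite -lerBlDr; apply: (@le_div_weight a); rewrite ?weight_gt0 //.
move=> ta Ta ta_gt0; rewrite lerBlDr -lerBlDl.
apply: (@le_div_weight b); rewrite ?weight_gt0 // => tb Tb tb_gt0.
rewrite lerBlDl.
have h_gt0 : 0 < s / ta + (1 - s) / tb by rewrite addr_gt0 ?divr_gt0.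
rewrite -[s / ta + _]invrK lef_pV2 ?posrE ?invr_gt0 ?weight_gt0 //.
exact/weight_set_le/weight_set_comb.
Qed.

Lemma weight_argmin_endpoint a b (s : R) : Z a -> Z b -> 0 < s < 1 ->
  (forall x, Z x -> weight Z y (s *: a + (1 - s) *: b) <= weight Z y x) ->
  weight Z y a = weight Z y (s *: a + (1 - s) *: b).
Proof.
move=> Za Zb s01 wmin; have /andP[s_gt0 s_lt1] := s01.
have Zab : Z (s *: a + (1 - s) *: b) by apply: convex_comb; rewrite // !ltW.
move: (wmin _ Za) (wmin _ Zb) (weight_gt0 Zab) (weight_inv_convex Za Zb s01).
set m := weight Z y (s *: a + _); set wa := weight Z y a; set wb := weight Z y b.
move=> m_le_wa m_le_wb m_gt0 hconv.
have wa_gt0 : 0 < wa by apply: lt_le_trans m_le_wa.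
have hb : (1 - s) / wb <= (1 - s) / m.
  by rewrite ler_pM2l ?subr_gt0 // lef_pV2 ?posrE // (lt_le_trans m_gt0).
have : s / m <= s / wa.
  have -> : s / m = m^-1 - (1 - s) / m by field; rewrite gt_eqF.
  by rewrite lerBlDr (le_trans hconv) // lerD2l.
rewrite ler_pM2l // lef_pV2 ?posrE // => wa_le_m.
by apply/eqP; rewrite eq_le wa_le_m m_le_wa.
Qed.

Lemma weight_argmin_face (m : R) a b (s : R) :
  (forall x, Z x -> m <= weight Z y x) -> Z a -> Z b -> 0 < s < 1 ->
  weight Z y (s *: a + (1 - s) *: b) = m -> weight Z y a = m /\ weight Z y b = m.
Proof.
move=> mmin Za Zb s01 wab; have /andP[s_gt0 s_lt1] := s01.
have wmin x : Z x -> weight Z y (s *: a + (1 - s) *: b) <= weight Z y x.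
  by rewrite wab; exact: mmin.
split; first by rewrite -wab; exact: weight_argmin_endpoint.
have ba : (1 - s) *: b + (1 - (1 - s)) *: a = s *: a + (1 - s) *: b.
  by apply/rowP => j; rewrite !mxE; ring.
rewrite -wab -ba; apply: weight_argmin_endpoint; rewrite ?ba //.
by rewrite subr_gt0 s_lt1 ltrBlDr ltrDl.
Qed.

End InteriorPoint.
End Weight.

Section ExtremePoint.
Variables (R : realType) (n : nat).

Definition sqnorm (x : 'rV[R]_n) := \sum_j x 0 j ^+ 2.

Lemma sqnorm_continuous : continuous sqnorm.
Proof.
apply: continuous_big; first exact: add_continuous.
move=> j _ x; have cj := @coord_continuous R 1 n 0 j x.
exact: (cvgM cj cj).
Qed.

Lemma sqnorm_strictly_convex a b x (t : R) : 0 < t < 1 -> x = t *: a + (1 - t) *: b ->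
  sqnorm a <= sqnorm x -> sqnorm b <= sqnorm x -> a = b.
Proof.
move=> /andP[t_gt0 t_lt1] ex qa qb.
have t1_gt0 : 0 < 1 - t by rewrite subr_gt0.
have gap : t * sqnorm a + (1 - t) * sqnorm b - sqnorm x =
    t * (1 - t) * \sum_j (a 0 j - b 0 j) ^+ 2.
  rewrite /sqnorm !mulr_sumr -big_split /= -sumrB; apply: eq_bigr => j _.
  by rewrite ex !mxE; ring.
have : t * (1 - t) * \sum_j (a 0 j - b 0 j) ^+ 2 <= 0.
  rewrite -gap subr_le0 [leRHS](_ : _ = t * sqnorm x + (1 - t) * sqnorm x); last by ring.
  by rewrite lerD // ler_wpM2l // ltW.
rewrite pmulr_rle0 ?mulr_gt0 // => sum_le0.
have sum0 : \sum_j (a 0 j - b 0 j) ^+ 2 = 0.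
  by apply/eqP; rewrite eq_le sum_le0 sumr_ge0 // => j _; exact: sqr_ge0.
apply/rowP => j; apply/eqP; rewrite -subr_eq0 -sqrf_eq0.
by rewrite (psumr_eq0P (fun j _ => sqr_ge0 (a 0 j - b 0 j)) sum0).
Qed.

Lemma face_argmax_sqnorm_extreme (Z M : set 'rV[R]_n) x : M `<=` Z ->
  (forall a b (t : R), Z a -> Z b -> 0 < t < 1 ->
     M (t *: a + (1 - t) *: b) -> M a /\ M b) ->
  M x -> (forall z, M z -> sqnorm z <= sqnorm x) -> extreme_point Z x.
Proof.
move=> MZ faceM Mx xmax; split=> [|a b t Za Zb t01 ex]; first exact: MZ.
have [Ma Mb] : M a /\ M b by apply: (faceM _ _ _ Za Zb t01); rewrite -ex.
have ab := sqnorm_strictly_convex t01 ex (xmax _ Ma) (xmax _ Mb).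
suff xb : x = b by rewrite ab -xb.
by rewrite ex ab; apply/rowP => j; rewrite !mxE; ring.
Qed.

End ExtremePoint.

Theorem proposition1 (R : realType) (n : nat) (Z : set 'rV[R]_n) :
  convex_set Z -> compact Z ->
  forall y : 'rV[R]_n, Z y -> ~ alg_boundary Z y ->
  exists x : 'rV[R]_n, extreme_point Z x /\ boundariness Z y = weight Z y x.
Proof.
move=> cvxZ cptZ y Zy ybd.
have y_icore := not_alg_boundary_icore Zy ybd.
have wcont := weight_continuous cvxZ Zy y_icore.
have [x0 /set_mem Zx0 x0min] := EVT_min_rV (ex_intro _ y Zy) cptZ wcont.
have {}x0min x : Z x -> weight Z y x0 <= weight Z y x.
  by move=> Zx; apply/x0min/mem_set.
pose M := Z `&` weight Z y @^-1` [set weight Z y x0].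
have cptM : compact M := compact_level_set (@norm_hausdorff _ _) cptZ wcont.
have [x1 /set_mem Mx1 x1max] := EVT_max_rV (ex_intro _ x0 (conj Zx0 erefl))
  cptM (continuous_subspaceT (@sqnorm_continuous R n)).
exists x1; split.
  apply: (face_argmax_sqnorm_extreme (M := M)) => // [z [] //|a b t Za Zb t01 [_ wab]|z Mz].
    have [wa wb] := weight_argmin_face cvxZ Zy y_icore x0min Za Zb t01 wab.
    by split; split.
  exact/x1max/mem_set.
by rewrite /boundariness (inf_image_argmin Zx0 x0min) (proj2 Mx1).
Qed.
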